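(* For $0\le n\le m$ let $\alpha_n:\mathbb R\to\mathbb R$ be polynomials. The differential operator $K=\sum_{n=0}^m\alpha_n(x)\frac{d^n}{dx^n}=\sum_{n=0}^m\alpha_n(A^\dagger)A^n$ acting on $f\in\mathcal C_0^\infty(\mathbb R)$ is dual, with duality function $D(x,n)=x^n$ ($x\in\mathbb R$, $n\in\mathbb N$), to the operator $\widehat K=\sum_{n=0}^m a^n\alpha_n(a^\dagger)$ acting on functions $f:\mathbb N\to\mathbb R$; that is, $K_lD=\widehat K_rD$.
   Context: $\mathbb N=\{0,1,2,\dots\}$. On smooth functions $f:\mathbb R\to\mathbb R$: $Af(x)=f'(x)$, $A^\dagger f(x)=xf(x)$. On functions $f:\mathbb N\to\mathbb R$: $af(n)=nf(n-1)$, $a^\dagger f(n)=f(n+1)$. For a polynomial $\alpha$, $\alpha(a^\dagger)$ is the corresponding polynomial in the operator $a^\dagger$, and $a^n\alpha_n(a^\dagger)$ means first apply $\alpha_n(a^\dagger)$ then $a^n$. Left/right actions: $(K_lD)(x,n)=(KD(\cdot,n))(x)$, $(\widehat K_rD)(x,n)=(\widehat KD(x,\cdot))(n)$. *)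

From mathcomp Require Import all_boot all_order all_algebra.
From mathcomp Require Import all_classical all_reals all_analysis.
Set Implicit Arguments. Unset Strict Implicit. Unset Printing Implicit Defensive.
Import Order.TTheory GRing.Theory Num.Theory.
Local Open Scope ring_scope.

Section Ops.
Variable R : realType.

Definition Aop (f : R -> R) : R -> R := derive1 f.
Definition Adag (f : R -> R) : R -> R := fun x => x * f x.
Definition poly_Adag (p : {poly R}) (f : R -> R) : R -> R :=
  fun x => \sum_(i < size p) p`_i * iter i Adag f x.

(* a g (n) = n g(n-1)  (at n = 0 the factor n vanishes) *)
Definition aop (g : nat -> R) : nat -> R := fun n => n%:R * g n.-1.
Definition adag (g : nat -> R) : nat -> R := fun n => g n.+1.
Definition poly_adag (p : {poly R}) (g : nat -> R) : nat -> R :=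
  fun n => \sum_(i < size p) p`_i * iter i adag g n.

Definition Kop (m : nat) (alpha : nat -> {poly R}) (f : R -> R) : R -> R :=
  fun x => \sum_(n < m.+1) poly_Adag (alpha n) (iter n Aop f) x.

Definition Khat (m : nat) (alpha : nat -> {poly R}) (g : nat -> R) : nat -> R :=
  fun k => \sum_(n < m.+1) iter n aop (poly_adag (alpha n) g) k.

Definition Dfun (x : R) (n : nat) : R := x ^+ n.

Definition act_l (K : (R -> R) -> R -> R) (D : R -> nat -> R) : R -> nat -> R :=
  fun x n => K (fun y => D y n) x.
Definition act_r (K : (nat -> R) -> nat -> R) (D : R -> nat -> R) : R -> nat -> R :=
  fun x n => K (D x) n.
End Ops.

From mathcomp Require Import all_boot all_order all_algebra.
From mathcomp Require Import all_classical all_reals all_analysis.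
Import Order.TTheory GRing.Theory Num.Theory.
Local Open Scope ring_scope.

(** Both sides of the duality act on [D(x,k) = x^k] in the same way: a
   polynomial in the creation operator multiplies by [alpha(x)] (since
   [A^dagger D = x D = a^dagger D]), and the n-th power of the annihilation
   operator produces the falling factorial [k^_n x^(k-n)] (since
   [A D(., k) = k x^(k-1) = a D(x, .)]).  The two orders of composition in
   [K] and [Khat] therefore give the same term. *)

Section DualityOperators.
Variable R : realType.

Lemma iter_Aop_exp (k n : nat) :
  iter n (@Aop R) (fun y => y ^+ k) = fun y => (k ^_ n)%:R * y ^+ (k - n).
Proof.
elim: n => [|n IH] /=.
  by apply/funext => y; rewrite ffactn0 subn0 mul1r.
rewrite IH; apply/funext => y; rewrite /Aop derive1Ml; last exact: exprn_derivable.
rewrite exp_derive1 ffactnSr natrM /= -mulrA; congr (_ * _).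
by rewrite -subn1 -subnDA addn1.
Qed.

Lemma iter_AdagE (i : nat) (f : R -> R) (x : R) :
  iter i (@Adag R) f x = x ^+ i * f x.
Proof.
elim: i => [|i IH] /=; first by rewrite mul1r.
by rewrite /Adag IH exprS mulrA.
Qed.

Lemma poly_AdagE (p : {poly R}) (f : R -> R) (x : R) :
  poly_Adag p f x = p.[x] * f x.
Proof.
rewrite /poly_Adag horner_coef mulr_suml; apply: eq_bigr => i _.
by rewrite iter_AdagE mulrA.
Qed.

Lemma iter_adagE (i : nat) (g : nat -> R) (k : nat) :
  iter i (@adag R) g k = g (k + i)%N.
Proof.
elim: i k => [|i IH] k /=; first by rewrite addn0.
by rewrite /adag IH addnS.
Qed.

Lemma poly_adag_Dfun (p : {poly R}) (x : R) (k : nat) :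
  poly_adag p (Dfun x) k = p.[x] * Dfun x k.
Proof.
rewrite /poly_adag horner_coef mulr_suml; apply: eq_bigr => i _.
rewrite iter_adagE /Dfun exprD -mulrA; congr (_ * _); exact: mulrC.
Qed.

Lemma iter_aopE (n : nat) (g : nat -> R) (k : nat) :
  iter n (@aop R) g k = (k ^_ n)%:R * g (k - n)%N.
Proof.
elim: n k => [|n IH] k /=; first by rewrite ffactn0 subn0 mul1r.
rewrite /aop IH ffactnS natrM mulrA; congr (_ * g _).
by rewrite -subn1 -subnDA add1n.
Qed.

End DualityOperators.

Theorem theorem3p1 (R : realType) (m : nat) (alpha : nat -> {poly R}) :
  act_l (Kop m alpha) (@Dfun R) = act_r (Khat m alpha) (@Dfun R).
Proof.
apply/funext => x; apply/funext => k.
rewrite /act_l /act_r /Kop /Khat; apply: eq_bigr => n _.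
rewrite poly_AdagE iter_Aop_exp iter_aopE poly_adag_Dfun /Dfun.
by rewrite mulrCA.
Qed.
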